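(* Let $m,s,t\in\mathbb{N}_0$ and let $e\in\mathbb{Z}$ with $-t\le e\le s$. Then \[ \begin{bmatrix}m\\ t\end{bmatrix}_q\begin{bmatrix}m+e\\ s\end{bmatrix}_q=\sum_{j\geq 0}q^{(s-j)(t+e-j)}\begin{bmatrix}t+e\\ j\end{bmatrix}_q\begin{bmatrix}s-e\\ s-j\end{bmatrix}_q\begin{bmatrix}m+j\\ s+t\end{bmatrix}_q \] as an identity of polynomials in $q$ (equivalently, for every $q\in\mathbb{C}$).
   Context: For $n\in\mathbb{N}_0$ the $q$-integer is $[n]_q=1+q+\dots+q^{n-1}=\frac{q^n-1}{q-1}$, the $q$-factorial is $[n]_q!=[n]_q[n-1]_q\cdots[1]_q$, and for $n,k\in\mathbb{N}_0$ with $k\le n$ the $q$-binomial coefficient is $\begin{bmatrix}n\\ k\end{bmatrix}_q=\frac{[n]_q!}{[k]_q![n-k]_q!}$, a polynomial in $q$. By convention $\begin{bmatrix}n\\ k\end{bmatrix}_q=0$ whenever $n<k$ (for $k\ge 0$; in particular whenever the top entry $n$ is negative). *)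

From mathcomp Require Import all_boot all_order all_algebra.
Set Implicit Arguments. Unset Strict Implicit. Unset Printing Implicit Defensive.
Import Order.TTheory GRing.Theory Num.Theory.
Local Open Scope ring_scope.

Definition qint (n : nat) : {poly rat} := \sum_(i < n) 'X^i.
Definition qfact (n : nat) : {poly rat} := \prod_(i < n) qint i.+1.
(* q-binomial [n k]_q = [n]_q! / ([k]_q! [n-k]_q!) for k <= n, 0 if n < k;
   the quotient is exact (polynomial division over a field). *)
Definition qbinom (n k : nat) : {poly rat} :=
  if (k <= n)%N then qfact n %/ (qfact k * qfact (n - k)) else 0.
Definition qbinomz (n : int) (k : nat) : {poly rat} :=
  match n with Posz n' => qbinom n' k | Negz _ => 0 end.

(* With a = t + e, b = s - e and n = m + e (so n + t = m + a and s + t = a + b),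
   the identity reads
     [m, t] [n, s] = sum_j q^((s-j)(a-j)) [a, j] [b, s-j] [m+j, s+t].
   It is proved by induction on m, for the q-binomials defined by the q-Pascal
   recurrence.  Expanding [m+1, t] and [n+1, s+1] on the left, and [m+1+j, s+t]
   and [b+1, s+1-j] by the two q-Pascal rules on the right, splits both sides
   into the same three instances of the induction hypothesis.  In the base
   cases m = 0, n = 0, s = 0 and b = 0 at most one term of the sum survives;
   for b = 0 this is [m, t] [m+s, s] = [s+t, s] [m+s, s+t], checked on
   q-factorials.  When m + e < 0 both sides vanish. *)

From mathcomp Require Import all_boot all_order all_algebra.
From mathcomp Require Import zify ring.
Import Order.TTheory GRing.Theory Num.Theory.
Local Open Scope ring_scope.

Fixpoint qbin (n k : nat) : {poly rat} :=
  match n, k with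
  | _, 0 => 1
  | 0, _.+1 => 0
  | n'.+1, k'.+1 => qbin n' k' + 'X^(k'.+1) * qbin n' k'.+1
  end.
Arguments qbin : simpl nomatch.

Definition qbin_pred (n k : nat) : {poly rat} :=
  if k is k'.+1 then qbin n k' else 0.

Lemma qbin0 n : qbin n 0 = 1. Proof. by case: n. Qed.

Lemma qbin_small {n k} : (n < k)%N -> qbin n k = 0.
Proof.
elim: n k => [|n IHn] [|k] //= ltnk.
by rewrite !IHn ?mulr0 ?addr0 //; lia.
Qed.

Lemma qbinn n : qbin n n = 1.
Proof. by elim: n => //= n ->; rewrite qbin_small ?mulr0 ?addr0. Qed.

Lemma qbinS n k : qbin n.+1 k = qbin_pred n k + 'X^k * qbin n k.
Proof. by case: k => [|k] /=; rewrite ?qbin0 ?add0r ?mulr1. Qed.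

Lemma qintD a b : qint (a + b) = qint a + 'X^a * qint b.
Proof.
rewrite /qint big_split_ord /= mulr_sumr; congr (_ + _).
by apply: eq_bigr => i _; rewrite exprD.
Qed.

Lemma qint0 : qint 0 = 0. Proof. by rewrite /qint big_ord0. Qed.

Lemma qint_neq0 n : qint n.+1 != 0.
Proof.
apply/negP => /eqP /(congr1 (horner^~ 1)).
rewrite horner0 /qint horner_sum.
under eq_bigr do rewrite hornerXn expr1n.
by rewrite sumr_const card_ord => /eqP; rewrite pnatr_eq0.
Qed.

Lemma qfact0 : qfact 0 = 1. Proof. by rewrite /qfact big_ord0. Qed.

Lemma qfactS n : qfact n.+1 = qfact n * qint n.+1.
Proof. by rewrite /qfact big_ord_recr. Qed.

Lemma qfact_neq0 n : qfact n != 0.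
Proof. by apply/prodf_neq0 => i _; apply: qint_neq0. Qed.

Lemma qbin_fact {n k} : (k <= n)%N -> qbin n k * (qfact k * qfact (n - k)) = qfact n.
Proof.
elim: n k => [|n IHn] [|k] //=; rewrite ?qfact0 ?mulr1 ?subn0 ?mul1r // subSS => lekn.
have IHk1 : qbin n k.+1 * (qfact k.+1 * qfact (n - k)) = qfact n * qint (n - k).
  have [ltkn | lenk] := ltnP k n.
    have -> : (n - k = (n - k.+1).+1)%N by lia.
    by rewrite (qfactS (n - k.+1)) -(IHn k.+1 ltkn); ring.
  have -> : (n - k = 0)%N by lia.
  by rewrite qbin_small ?qint0 ?mul0r ?mulr0 //; lia.
have qint_split : qint n.+1 = qint k.+1 + 'X^(k.+1) * qint (n - k).
  by rewrite -qintD; congr qint; lia.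
transitivity (qbin n k * (qfact k * qfact (n - k)) * qint k.+1
    + 'X^(k.+1) * (qbin n k.+1 * (qfact k.+1 * qfact (n - k)))).
  by rewrite qfactS; ring.
by rewrite IHk1 (IHn k lekn) (qfactS n) qint_split; ring.
Qed.

Lemma qbinomE n k : qbinom n k = qbin n k.
Proof.
rewrite /qbinom; case: ifP => [lekn | /negbT]; last by rewrite -ltnNge => /qbin_small.
by rewrite -(qbin_fact lekn) mulpK // mulf_neq0 ?qfact_neq0.
Qed.

Lemma qbin_sub {n k} : (k <= n)%N -> qbin n (n - k) = qbin n k.
Proof.
move=> lekn; have nz : qfact k * qfact (n - k) != 0 by rewrite mulf_neq0 ?qfact_neq0.
apply: (mulIf nz); rewrite (qbin_fact lekn) -(qbin_fact (leq_subr k n)).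
by rewrite subKn // [qfact k * _]mulrC.
Qed.

Lemma qbinS' n k : qbin n.+1 k = 'X^(n.+1 - k) * qbin_pred n k + qbin n k.
Proof.
case: k => [|k]; first by rewrite /= qbin0 mulr0 add0r.
rewrite [qbin_pred _ _]/=.
have [ltkn | ltnk | <-] := ltngtP k n.
- have sub_succ : (n - k = (n - k.+1).+1)%N by lia.
  rewrite -[LHS](qbin_sub (ltnW ltkn : k.+1 <= n.+1)%N) !subSS sub_succ /= -sub_succ.
  by rewrite (qbin_sub ltkn) (qbin_sub (ltnW ltkn)) addrC.
- by rewrite !qbin_small ?mulr0 ?addr0 //; lia.
- by rewrite subnn !qbinn qbin_small ?expr0 ?mulr1 ?addr0.
Qed.

Lemma qbin_mul_subset m s t :
  qbin m t * qbin (m + s) s = qbin (s + t) s * qbin (m + s) (s + t).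
Proof.
have [ltmt | letm] := ltnP m t.
  by rewrite (qbin_small ltmt) [qbin (m + s) (s + t)]qbin_small ?mul0r ?mulr0 //; lia.
have nz : qfact s * qfact t * qfact (m - t) != 0 by rewrite !mulf_neq0 ?qfact_neq0.
apply: (mulIf nz).
have fact_mt := qbin_fact letm.
have := qbin_fact (leq_addl m s); rewrite addnK => fact_ms_s.
have := qbin_fact (leq_addr t s); rewrite addKn => fact_st_s.
have le_st_ms : (s + t <= m + s)%N by lia.
have := qbin_fact le_st_ms; rewrite subnDA addnK => fact_ms_st.
transitivity (qbin (m + s) s * (qfact s * (qbin m t * (qfact t * qfact (m - t))))); first by ring.
rewrite fact_mt fact_ms_s -fact_ms_st -fact_st_s; ring.
Qed.

(* The right-hand side of the theorem is [qconv m (t + e) (s - e) s (s + t)]. *)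
Definition qconv (m a b s k : nat) : {poly rat} :=
  \sum_(j < s.+1)
    'X^((s - j) * (a - j)) * qbin a j * qbin b (s - j) * qbin (m + j) k.

Lemma qconv_eq0 m a b s k :
  (forall j, j <= a -> j <= s -> s - j <= b -> m + j < k)%N -> qconv m a b s k = 0.
Proof.
move=> small_top; apply: big1 => j _; have lejs := ltn_ord j.
have [ltaj | leja] := ltnP a j; first by rewrite (qbin_small ltaj) mulr0 !mul0r.
have [ltbsj | lesjb] := ltnP b (s - j); first by rewrite (qbin_small ltbsj) mulr0 mul0r.
by rewrite (qbin_small (small_top j leja lejs lesjb)) mulr0.
Qed.

Lemma qconv_pascal m a b s :
  qconv m.+1 a b.+1 s.+1 (a + b).+1 =
  'X^((a + b).+1) * qconv m a b.+1 s.+1 (a + b).+1 + qconv m a b s.+1 (a + b)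
  + 'X^(a + b - s) * qconv m a b s (a + b).
Proof.
have shifted : \sum_(j < s.+2) 'X^((s.+1 - j) * (a - j)) * qbin a j
      * ('X^(b.+1 - (s.+1 - j)) * qbin_pred b (s.+1 - j)) * qbin (m + j) (a + b)
    = 'X^(a + b - s) * qconv m a b s (a + b).
  rewrite big_ord_recr /= subnn !(mulr0, mul0r) addr0 /qconv mulr_sumr.
  apply: eq_bigr => j _ /=; have lejs := ltn_ord j.
  rewrite (_ : s.+1 - j = (s - j).+1)%N /=; last by lia.
  have [ltaj | leja] := ltnP a j; first by rewrite (qbin_small ltaj) !(mulr0, mul0r).
  have [ltbsj | lesjb] := ltnP b (s - j).
    by rewrite (qbin_small ltbsj) !(mulr0, mul0r).
  set rest := qbin a j * qbin b (s - j) * qbin (m + j) (a + b).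
  transitivity ('X^((s - j).+1 * (a - j) + (b.+1 - (s - j).+1)) * rest).
    by rewrite exprD /rest; ring.
  rewrite (_ : _ + _ = a + b - s + (s - j) * (a - j))%N; last by nia.
  by rewrite exprD /rest; ring.
rewrite -shifted /qconv mulr_sumr -!big_split; apply: eq_bigr => j _.
by rewrite addSn (qbinS (m + j)) (qbinS' b) /=; ring.
Qed.

Lemma qconv_s0 m a b k : qconv m a b 0 k = qbin m k.
Proof. by rewrite /qconv big_ord1 subnn mul0n expr0 !qbin0 !mul1r addn0. Qed.

Lemma qconv_m0 a b s : qconv 0 a b s s = qbin a s.
Proof.
rewrite /qconv big_ord_recr big1 => [|j _] /=.
  by rewrite add0r subnn mul0n expr0 mul1r qbin0 mulr1 add0n qbinn mulr1.
by rewrite add0n (qbin_small (ltn_ord j)) mulr0.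
Qed.

Lemma qconv_b0 m a s k : qconv m a 0 s k = qbin a s * qbin (m + s) k.
Proof.
rewrite /qconv big_ord_recr big1 => [|j _] /=.
  by rewrite add0r subnn mul0n expr0 mul1r qbin0 mulr1.
by rewrite (qbin_small (_ : 0 < s - j)%N) ?mulr0 ?mul0r // subn_gt0.
Qed.

Lemma qbin_mul_qconv m n a b s t :
  (n + t = m + a)%N -> (s + t = a + b)%N -> qbin m t * qbin n s = qconv m a b s (s + t).
Proof.
elim: m n a b s t => [|m IHm] n a b s t.
  case: t => [|t] sum_n sum_s.
    by rewrite qbin0 mul1r addn0 qconv_m0 (_ : n = a) //; lia.
  by rewrite mul0r qconv_eq0 // => j _ lejs _; lia.
case: s => [|s] sum_n sum_s; first by rewrite qbin0 mulr1 add0n qconv_s0.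
case: n sum_n => [|n] sum_n.
  by rewrite mulr0 qconv_eq0 // => j leja _ _; lia.
case: b sum_s => [|b] sum_s.
  have -> : n.+1 = (m.+1 + s.+1)%N by lia.
  by rewrite qconv_b0 qbin_mul_subset (_ : a = s.+1 + t)%N //; lia.
have sum_s' : (s.+1 + t = (a + b).+1)%N by lia.
have expand : qbin m.+1 t * qbin n.+1 s.+1 = qbin_pred m t * qbin n.+1 s.+1
    + 'X^t * (qbin m t * qbin n s) + 'X^(s.+1 + t) * (qbin m t * qbin n s.+1).
  by rewrite qbinS [qbin n.+1 s.+1]/= exprD; ring.
have pred_term : qbin_pred m t * qbin n.+1 s.+1 = qconv m a b s.+1 (a + b).
  case: t sum_n sum_s {sum_s' expand} => [|t] sum_n sum_s.
    by rewrite mul0r qconv_eq0 // => j leja _ lesjb; lia.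
  have sum_st : (s.+1 + t = a + b)%N by lia.
  by rewrite [qbin_pred _ _]/= (IHm n.+1 a b s.+1 t) ?sum_st //; lia.
have sum_n' : (n + t = m + a)%N by lia.
have sum_st : (s + t = a + b)%N by lia.
have t_eq : (a + b - s = t)%N by lia.
rewrite expand pred_term (IHm n a b.+1 s.+1 t sum_n' sum_s) (IHm n a b s t sum_n' sum_st).
by rewrite sum_s' sum_st qconv_pascal t_eq addrC addrA.
Qed.

Theorem theorem1p1 (m s t : nat) (e : int)
  (he1 : - (t%:Z) <= e) (he2 : e <= s%:Z) :
  qbinom m t * qbinomz (m%:Z + e) s =
  \sum_(j < s.+1)
     'X^((s - j) * (absz (t%:Z + e) - j)) * qbinomz (t%:Z + e) j
       * qbinomz (s%:Z - e) (s - j) * qbinom (m + j) (s + t).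
Proof.
set a := absz (t%:Z + e); set b := absz (s%:Z - e).
have ta : t%:Z + e = a by rewrite /a; lia.
have sb : s%:Z - e = b by rewrite /b; lia.
have sum_s : (s + t = a + b)%N by rewrite /a /b; lia.
rewrite ta sb qbinomE; under eq_bigr do rewrite /= !qbinomE.
rewrite -/(qconv m a b s (s + t)).
have [le0n | ltn0] := lerP 0 (m%:Z + e).
  set n := absz (m%:Z + e); have mn : m%:Z + e = n by rewrite /n; lia.
  by rewrite mn /= qbinomE; apply: qbin_mul_qconv => //; rewrite /n /a; lia.
rewrite (_ : qbinomz _ s = 0) ?mulr0; last by case: (m%:Z + e) ltn0.
by rewrite qconv_eq0 // => j leja _ _; rewrite /a in leja; lia.
Qed.
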